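(* Let $\mathcal{A}$ be a line arrangement in $\mathbb{P}^2_{\mathbb{C}}$ with $n=|\mathcal{A}|$. If $n\le 5$, then $\mathcal{A}$ is of type $\mathcal{C}_0$ or $\mathcal{C}_1$. If $n\le 6$, then $\mathcal{A}$ is of type $\mathcal{C}_0$, $\mathcal{C}_1$ or $\mathcal{C}_2$.
   Context: $\operatorname{mult}(\mathcal{A})$ is the set of points on at least three lines of $\mathcal{A}$. $\mathcal{A}$ is of type $\mathcal{C}_k$ if $k$ is the minimal number of lines of $\mathcal{A}$ whose union contains $\operatorname{mult}(\mathcal{A})$. *)

From HB Require Import structures.
From mathcomp Require Import all_boot all_order all_algebra all_field.
Set Implicit Arguments. Unset Strict Implicit. Unset Printing Implicit Defensive.
Import Order.TTheory GRing.Theory Num.Theory.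
Local Open Scope ring_scope.

(* Homogeneous coordinates: a point or a line of P^2_C is a nonzero row
   vector of C^3, taken up to a nonzero scalar. *)
Definition hvec := 'rV[algC]_3.

Definition incident (p l : hvec) : bool := (p *m l^T) 0 0 == 0.

Definition proj_eq (u v : hvec) : Prop := exists2 c : algC, c != 0 & v = c *: u.

Definition line_arrangement (A : seq hvec) : Prop :=
  (forall l, l \in A -> l != 0) /\
  (forall i j, (i < size A)%N -> (j < size A)%N -> i <> j ->
     ~ proj_eq (nth 0 A i) (nth 0 A j)).

Definition in_mult (A : seq hvec) (p : hvec) : Prop :=
  p != 0 /\ (3 <= count (incident p) A)%N.

Definition covers_mult (A S : seq hvec) : Prop :=
  forall p, in_mult A p -> exists2 l, l \in S & incident p l.

Definition type_C (A : seq hvec) (k : nat) : Prop :=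
  (exists S : seq hvec, [/\ uniq S, {subset S <= A}, size S = k & covers_mult A S])
  /\ (forall S : seq hvec, {subset S <= A} -> covers_mult A S -> (k <= size S)%N).

(* If two multiple points share a line [l], they already use at least five
   lines, and every other multiple point off [l] lies on a line through
   neither of them; so [l] together with the remaining [n - 5] lines covers
   mult(A). Otherwise distinct multiple points lie on disjoint sets of at
   least three lines each, so one line per multiple point gives a cover of
   size at most [n / 3]. For [n <= 6] both bounds are at most 2, and for
   [n <= 5] at most 1. *)
From mathcomp Require Import all_boot all_order all_algebra all_field.
From mathcomp Require Import ring zify.
From Stdlib Require Import Classical.

Set Implicit Arguments.
Unset Strict Implicit.
Unset Printing Implicit Defensive.

Import GRing.Theory.
Local Open Scope ring_scope.

Definition i0 : 'I_3 := @Ordinal 3 0 isT.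
Definition i1 : 'I_3 := @Ordinal 3 1 isT.
Definition i2 : 'I_3 := @Ordinal 3 2 isT.

Lemma dotE (p l : hvec) :
  (p *m l^T) 0 0 = p 0 i0 * l 0 i0 + p 0 i1 * l 0 i1 + p 0 i2 * l 0 i2.
Proof.
rewrite !mxE !big_ord_recr big_ord0 /= add0r !mxE.
by congr (_ * _ + _ * _ + _ * _); congr (_ _ _); apply/val_inj.
Qed.

Lemma incidentE (p l : hvec) :
  incident p l = (p 0 i0 * l 0 i0 + p 0 i1 * l 0 i1 + p 0 i2 * l 0 i2 == 0).
Proof. by rewrite /incident dotE. Qed.

Lemma incidentZ (c : algC) (p l : hvec) : incident p l -> incident (c *: p) l.
Proof.
by rewrite /incident => /eqP pl; rewrite -scalemxAl [X in X == _]mxE pl mulr0.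
Qed.

Lemma eq_hvec (u v : hvec) :
  u 0 i0 = v 0 i0 -> u 0 i1 = v 0 i1 -> u 0 i2 = v 0 i2 -> u = v.
Proof.
move=> e0 e1 e2; apply/rowP => -[[|[|[|k]]] lt_k3] //.
- by rewrite (_ : Ordinal lt_k3 = i0) //; apply/val_inj.
- by rewrite (_ : Ordinal lt_k3 = i1) //; apply/val_inj.
- by rewrite (_ : Ordinal lt_k3 = i2) //; apply/val_inj.
Qed.

Lemma hvec_neq0_coord (u : hvec) :
  u != 0 -> [\/ u 0 i0 != 0, u 0 i1 != 0 | u 0 i2 != 0].
Proof.
move=> u_nz; apply/or3P; apply/negPn/negP.
rewrite !negb_or !negbK => /and3P[/eqP u0 /eqP u1 /eqP u2].
by move/eqP: u_nz; apply; apply: eq_hvec; rewrite ?mxE.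
Qed.

Lemma scale_coord_neq0 (v : hvec) (c u0 u1 u2 : algC) : v != 0 ->
  v 0 i0 = c * u0 -> v 0 i1 = c * u1 -> v 0 i2 = c * u2 -> c != 0.
Proof.
move=> v_nz e0 e1 e2; apply: contraNneq v_nz => c0.
by apply/eqP/eq_hvec; rewrite mxE ?e0 ?e1 ?e2 c0 mul0r.
Qed.

Lemma proportional_of_minors0 (u0 u1 u2 v0 v1 v2 : algC) :
  [\/ u0 != 0, u1 != 0 | u2 != 0] ->
  u0 * v1 = u1 * v0 -> u0 * v2 = u2 * v0 -> u1 * v2 = u2 * v1 ->
  exists c, [/\ v0 = c * u0, v1 = c * u1 & v2 = c * u2].
Proof.
case=> u_nz e01 e02 e12.
- exists (v0 / u0); split.
  + by field.
  + by apply: (mulfI u_nz); rewrite e01; field.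
  + by apply: (mulfI u_nz); rewrite e02; field.
- exists (v1 / u1); split.
  + by apply: (mulfI u_nz); rewrite -e01; field.
  + by field.
  + by apply: (mulfI u_nz); rewrite e12; field.
- exists (v2 / u2); split.
  + by apply: (mulfI u_nz); rewrite -e02; field.
  + by apply: (mulfI u_nz); rewrite -e12; field.
  + by field.
Qed.

(* A point on the lines [l] and [m] is proportional to their cross product:
   the 2x2 minors of the pair (l x m, p) vanish. *)
Lemma minors_cross0 (p0 p1 p2 l0 l1 l2 m0 m1 m2 : algC) :
  p0 * l0 + p1 * l1 + p2 * l2 = 0 -> p0 * m0 + p1 * m1 + p2 * m2 = 0 ->
  [/\ (l1 * m2 - l2 * m1) * p1 = (l2 * m0 - l0 * m2) * p0,
      (l1 * m2 - l2 * m1) * p2 = (l0 * m1 - l1 * m0) * p0 &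
      (l2 * m0 - l0 * m2) * p2 = (l0 * m1 - l1 * m0) * p1].
Proof.
move=> pl pm; split; apply/eqP; rewrite -subr_eq0.
- have -> : (l1 * m2 - l2 * m1) * p1 - (l2 * m0 - l0 * m2) * p0 =
    m2 * (p0 * l0 + p1 * l1 + p2 * l2) - l2 * (p0 * m0 + p1 * m1 + p2 * m2)
    by ring.
  by rewrite pl pm !mulr0 subr0.
- have -> : (l1 * m2 - l2 * m1) * p2 - (l0 * m1 - l1 * m0) * p0 =
    l1 * (p0 * m0 + p1 * m1 + p2 * m2) - m1 * (p0 * l0 + p1 * l1 + p2 * l2)
    by ring.
  by rewrite pl pm !mulr0 subr0.
- have -> : (l2 * m0 - l0 * m2) * p2 - (l0 * m1 - l1 * m0) * p1 =
    m0 * (p0 * l0 + p1 * l1 + p2 * l2) - l0 * (p0 * m0 + p1 * m1 + p2 * m2)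
    by ring.
  by rewrite pl pm !mulr0 subr0.
Qed.

Lemma proj_eq_meet (p q l m : hvec) :
  p != 0 -> q != 0 -> l != 0 -> m != 0 -> ~ proj_eq l m ->
  incident p l -> incident p m -> incident q l -> incident q m -> proj_eq p q.
Proof.
move=> p_nz q_nz l_nz m_nz nlm.
rewrite !incidentE => /eqP pl /eqP pm /eqP ql /eqP qm.
set l0 := l 0 i0 in pl ql *; set l1 := l 0 i1 in pl ql *.
set l2 := l 0 i2 in pl ql *; set m0 := m 0 i0 in pm qm *.
set m1 := m 0 i1 in pm qm *; set m2 := m 0 i2 in pm qm *.
have cross_nz : [\/ l1 * m2 - l2 * m1 != 0, l2 * m0 - l0 * m2 != 0
                  | l0 * m1 - l1 * m0 != 0].
  apply/or3P; apply/negPn/negP; rewrite !negb_or !negbK.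
  move=> /and3P[/eqP/subr0_eq e12 /eqP/subr0_eq e20 /eqP/subr0_eq e01].
  have [k [e0 e1 e2]] :=
    proportional_of_minors0 (hvec_neq0_coord l_nz) e01 (esym e20) e12.
  apply: nlm; exists k; first exact: scale_coord_neq0 e0 e1 e2.
  by apply: eq_hvec; rewrite !mxE.
have [pc0 pc1 pc2] := minors_cross0 pl pm.
have [qc0 qc1 qc2] := minors_cross0 ql qm.
have [c [c0 c1 c2]] := proportional_of_minors0 cross_nz pc0 pc1 pc2.
have [d [d0 d1 d2]] := proportional_of_minors0 cross_nz qc0 qc1 qc2.
have c_nz := scale_coord_neq0 p_nz c0 c1 c2.
have d_nz := scale_coord_neq0 q_nz d0 d1 d2.
exists (d / c); first by rewrite mulf_neq0 ?invr_eq0.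
by apply: eq_hvec; rewrite !mxE ?c0 ?c1 ?c2 ?d0 ?d1 ?d2; field.
Qed.

Definition lines_through (A : seq hvec) (p : hvec) :=
  [set i : 'I_(size A) | incident p (nth 0 A i)].

Lemma mem_lines_through (A : seq hvec) (p : hvec) (i : 'I_(size A)) :
  (i \in lines_through A p) = incident p (nth 0 A i).
Proof. by rewrite inE. Qed.

Lemma card_lines_through (A : seq hvec) (p : hvec) :
  #|lines_through A p| = count (incident p) A.
Proof.
rewrite -sum1_count (big_nth 0) big_mkord sum1_card.
by apply: eq_card => i; rewrite inE.
Qed.

Lemma card_lines_through_mult (A : seq hvec) (p : hvec) :
  in_mult A p -> (3 <= #|lines_through A p|)%N.
Proof. by case=> _; rewrite card_lines_through. Qed.

Lemma not_proj_eq_incident (p r l : hvec) :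
  incident p l -> ~~ incident r l -> ~ proj_eq p r.
Proof. by move=> pl /negP rl [c _ er]; apply: rl; rewrite er incidentZ. Qed.

Lemma card_lines_throughI (A : seq hvec) (p q : hvec) : line_arrangement A ->
  p != 0 -> q != 0 -> ~ proj_eq p q ->
  (#|lines_through A p :&: lines_through A q| <= 1)%N.
Proof.
move=> [A_nz A_uniq] p_nz q_nz npq; rewrite leqNgt; apply/negP.
case/card_gt1P => i [j [+ + nij]]; rewrite !inE => /andP[pi qi] /andP[pj qj].
apply: npq (proj_eq_meet p_nz q_nz _ _ _ pi pj qi qj).
1, 2: exact/A_nz/mem_nth.
by apply: A_uniq => // eij; rewrite (val_inj eij) eqxx in nij.
Qed.

Definition coverable (A : seq hvec) (k : nat) : Prop :=
  exists S : seq hvec, [/\ {subset S <= A}, covers_mult A S & (size S <= k)%N].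

Lemma coverable_le (A : seq hvec) (k m : nat) :
  coverable A k -> (k <= m)%N -> coverable A m.
Proof. by move=> [S [sSA cS le_S]] le_km; exists S; split=> //; lia. Qed.

Lemma covers_mult_undup (A S : seq hvec) :
  covers_mult A S -> covers_mult A (undup S).
Proof. by move=> cS p /cS[l lS pl]; exists l; rewrite ?mem_undup. Qed.

Lemma coverable_type_C (A : seq hvec) (m : nat) :
  coverable A m -> exists2 k, (k <= m)%N & type_C A k.
Proof.
elim: m => [|m IH] [S [sSA cS le_S]].
  exists 0%N => //; split=> [|S' _ _ //].
  by exists [::]; case: S le_S cS {sSA}.
have [/IH[k le_km tk] | not_cov_m] := classic (coverable A m).
  by exists k; first exact: leqW.
have le_undup : (size (undup S) <= m.+1)%N := leq_trans (size_undup S) le_S.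
exists (size (undup S)) => //; split.
  exists (undup S); split; rewrite ?undup_uniq //.
    by move=> x; rewrite mem_undup => /sSA.
  exact: covers_mult_undup.
move=> S' sS'A cS'; apply: leq_trans le_undup _; rewrite leqNgt.
by apply/negP => lt_S'm; apply: not_cov_m; exists S'.
Qed.

Section SharedLine.

Variables (A : seq hvec) (p q : hvec) (i : 'I_(size A)).
Hypotheses (hA : line_arrangement A) (mp : in_mult A p) (mq : in_mult A q).
Hypotheses (npq : ~ proj_eq p q).
Hypotheses (ip : i \in lines_through A p) (iq : i \in lines_through A q).

Local Notation U := (lines_through A p :|: lines_through A q).

Lemma card_lines_through_shared : (5 <= #|U|)%N.
Proof.
have := cardsUI (lines_through A p) (lines_through A q).
have := card_lines_throughI hA mp.1 mq.1 npq.
by have := card_lines_through_mult mp; have := card_lines_through_mult mq; lia.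
Qed.

(* A third multiple point off the shared line meets each of the other two
   pencils in at most one line, so one of its three lines is new. *)
Lemma mult_off_shared_line r : in_mult A r -> ~~ incident r (nth 0 A i) ->
  exists2 j, j \in lines_through A r & j \notin U.
Proof.
move=> mr ri.
have npr : ~ proj_eq p r.
  by apply: not_proj_eq_incident ri; rewrite -mem_lines_through.
have nqr : ~ proj_eq q r.
  by apply: not_proj_eq_incident ri; rewrite -mem_lines_through.
have le_pr := card_lines_throughI hA mp.1 mr.1 npr.
have le_qr := card_lines_throughI hA mq.1 mr.1 nqr.
have le_rU : (#|lines_through A r :&: U| <=
    #|lines_through A p :&: lines_through A r| +
    #|lines_through A q :&: lines_through A r|)%N.
  by rewrite setIUr !(setIC (lines_through A r)) cardsU leq_subr.
have : (0 < #|lines_through A r :\: U|)%N.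
  have := cardsID U (lines_through A r).
  by have := card_lines_through_mult mr; lia.
by case/card_gt0P => j; rewrite inE => /andP[jU jr]; exists j.
Qed.

Lemma coverable_shared_line : coverable A (size A - 4).
Proof.
exists (nth 0 A i :: [seq nth 0 A j | j : 'I_(size A) in ~: U]); split.
- by move=> x; rewrite inE => /predU1P[-> | /imageP[j _ ->]]; apply: mem_nth.
- move=> r mr; have [ri | ri] := boolP (incident r (nth 0 A i)).
    by exists (nth 0 A i); rewrite ?mem_head.
  have [j jr jU] := mult_off_shared_line mr ri.
  exists (nth 0 A j); last by rewrite inE in jr.
  by rewrite inE image_f ?orbT // inE.
- rewrite /= size_image; have := cardsC U; rewrite card_ord.
  by have := card_lines_through_shared; lia.
Qed.

End SharedLine.

Section DisjointPencils.

Variable A : seq hvec.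
Hypothesis disjoint_mult : forall p q, in_mult A p -> in_mult A q ->
  ~ proj_eq p q -> [disjoint lines_through A p & lines_through A q].

(* Greedy choice of one line per uncovered multiple point: [T] collects the
   lines through the points chosen so far, each choice adding three new ones. *)
Lemma coverable_greedy (T : {set 'I_(size A)}) (S : seq hvec) :
  {subset S <= A} -> (3 * size S <= #|T|)%N ->
  (forall p, in_mult A p ->
     (exists2 l, l \in S & incident p l) \/ [disjoint lines_through A p & T]) ->
  coverable A (size A %/ 3).
Proof.
have [k] := ubnP #|~: T|; elim: k T S => [|k IH] T S // lt_k sSA card_S cover_T.
have [cS | ncS] := classic (covers_mult A S).
  exists S; split=> //; rewrite leq_divRL //.
  by have := max_card T; rewrite card_ord; lia.
have [r nr] := not_all_ex_not _ _ ncS.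
have [mr r_uncovered] := imply_to_and _ _ nr.
have disj_rT : [disjoint lines_through A r & T].
  by case: (cover_T r mr) => // r_covered; case: r_uncovered.
have [i ir] : exists i, i \in lines_through A r.
  by apply/card_gt0P; have := card_lines_through_mult mr; lia.
have card_Tr : #|T :|: lines_through A r| = (#|T| + #|lines_through A r|)%N.
  by apply/eqP; rewrite (leq_card_setU _ _).2 disjoint_sym.
apply: (IH (T :|: lines_through A r) (nth 0 A i :: S)).
- have := cardsC T; have := cardsC (T :|: lines_through A r).
  by have := card_lines_through_mult mr; lia.
- by move=> x /predU1P[-> | /sSA //]; apply: mem_nth.
- by rewrite /= card_Tr mulnS addnC leq_add ?card_lines_through_mult.
move=> p mp; have [[l lS pl] | disj_pT] := cover_T p mp.
  by left; exists l; rewrite // inE lS orbT.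
have [pi | pi] := boolP (incident p (nth 0 A i)).
  by left; exists (nth 0 A i); rewrite ?mem_head.
right; rewrite -setI_eq0 setIUr (disjoint_setI0 disj_pT) set0U setI_eq0.
rewrite disjoint_sym.
apply: disjoint_mult => //; apply: not_proj_eq_incident pi.
by rewrite -mem_lines_through.
Qed.

Lemma coverable_disjoint_pencils : coverable A (size A %/ 3).
Proof.
apply: (coverable_greedy (T := set0) (S := [::])) => // p _.
by right; rewrite -setI_eq0 setI0.
Qed.

End DisjointPencils.

Lemma coverable_mult (A : seq hvec) : line_arrangement A ->
  coverable A (maxn (size A - 4) (size A %/ 3)).
Proof.
move=> hA.
have [[p [q [i [mp mq npq ip iq]]]] | no_shared] := classic (exists p q i,
    [/\ in_mult A p, in_mult A q, ~ proj_eq p q,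
        i \in lines_through A p & i \in lines_through A q]).
  exact: coverable_le (coverable_shared_line hA mp mq npq ip iq) (leq_maxl _ _).
apply: coverable_le (coverable_disjoint_pencils _) (leq_maxr _ _).
move=> p q mp mq npq; rewrite -setI_eq0; apply/set0Pn => -[i].
by rewrite inE => /andP[ip iq]; apply: no_shared; exists p, q, i.
Qed.

Theorem mainTheorem11 (A : seq hvec) (hA : line_arrangement A) :
  ((size A <= 5)%N -> type_C A 0 \/ type_C A 1) /\
  ((size A <= 6)%N -> type_C A 0 \/ type_C A 1 \/ type_C A 2).
Proof.
have [k le_k tk] := coverable_type_C (coverable_mult hA).
split=> le_n.
  have : (k <= 1)%N by lia.
  by case: k tk {le_k} => [|[|]] // tk _; [left | right].
have : (k <= 2)%N by lia.
by case: k tk {le_k} => [|[|[|]]] // tk _; [left | right; left | right; right].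
Qed.
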